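(* In the MLR-DMPC setting described in the context, let $w\neq v$ be two CUs, $i\in\mathcal A$ a UAV and $k$ a round. If after executing the information-tracker update procedure of round $k$ the trackers $\mathcal D_{iw}(k)$ and $\mathcal D_{iv}(k)$ are both not deprecated, then $\mathcal D_{iw}(k)=\mathcal D_{iv}(k)$.
   Context: Setting (MLR-DMPC). There are $N$ UAVs indexed by $\mathcal A=\{1,\dots,N\}$ and $M$ compute units (CUs) indexed by $w\in\{1,\dots,M\}$, $1<M<N$. Time is divided into rounds $k=0,1,2,\dots$ of length $T>0$; each round consists of a computation phase followed by a communication phase in which every device broadcasts at most one message; any message may be lost at any receiver (arbitrary message loss). Nominal model: each UAV $i$ has a nominal system $\dot{\hat x}_i=\hat f_i(\hat x_i,\hat u_i)$, $\hat x_i\in\hat{\mathcal X}$, $\hat u_i\in\hat{\mathcal U}$, with nominal position $\hat p_i=\hat g_{p,i}(\hat x_i)\in\mathbb R^3$. Reference trajectories: in round $k$ UAV $i$ follows a reference $\hat x_i(\tau|k),\hat u_i(\tau|k)$, $\tau\ge 0$, applied at time $t=kT+\tau$. If in the communication phase of round $k$ UAV $i$ receives a trajectory $\hat u_{i,w}(\cdot|k)$ computed by CU $w$, then $\hat u_i(\tau|k+1)=\hat u_{i,w}(\tau+T|k)$; otherwise $\hat u_i(\tau|k+1)=\hat u_i(\tau+T|k)$. Each UAV broadcasts a message containing the metadata (computing CU and round) of the trajectory it currently follows. Information trackers: each CU $w$ keeps, for each UAV $i$, a set $\mathcal D_{iw}(k)$ of candidate trajectories (with metadata) together with a flag up-to-date/deprecated;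 elements are written $\tilde x_i(\cdot|k-1)$, $\tilde p_i(\cdot|k-1)$. Initially all trackers are empty and deprecated. At the start of round $k$, CU $w$ updates using the messages received in round $k-1$: (1) start from $\mathcal D_{iw}(k-1)$; for every UAV $i$ whose message was received, replace its tracker by the single stored trajectory whose metadata matches and mark that tracker up-to-date; (2) if some tracker then has more than one element, mark all trackers deprecated; (3) if fewer than $M$ CU messages were received, mark all trackers deprecated; (4) for every received CU message containing a newly computed trajectory for a UAV $i$, add it to $\mathcal D_{iw}(k)$. If all trackers are up-to-date, the CU runs a DMPC step: all such CUs compute the same set $\mathcal A_{ET}(k)$ of $M$ UAVs (highest priorities after max-consensus), CU $w$ selects the UAV at position $(k+w)\bmod M$ of $\mathcal A_{ET}(k)$ and, if that UAV's tracker has exactly one element, computes and broadcasts a new trajectory for it. Otherwise the CU is in message-loss-recovery mode: it computes no trajectory and instead (in alternate rounds) requests a UAV with a deprecated tracker to rebroadcast its current reference trajectory with metadata. *)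

From HB Require Import structures.
From mathcomp Require Import all_boot all_order.
From mathcomp Require Import finmap.
Set Implicit Arguments. Unset Strict Implicit. Unset Printing Implicit Defensive.
Local Open Scope fset_scope.

(* UAVs are 'I_N, CUs are 'I_M, rounds are nat.
   A trajectory is identified by its metadata: [None] = the initial reference
   trajectory of the UAV, [Some (w, k)] = the trajectory computed by CU [w] in
   round [k] (a CU computes at most one trajectory per round, so the metadata
   identifies the trajectory uniquely). *)
Definition Traj (M : nat) := option ('I_M * nat).

(* The environment: everything the protocol description leaves arbitrary. *)
Record env (N M : nat) := Env {
  (* rcvU k i w : the round-k message of UAV i is received by CU w *)
  rcvU : nat -> 'I_N -> 'I_M -> bool;
  (* rcvC k s w : the round-k message of CU s is received by CU w (s <> w) *)
  rcvC : nat -> 'I_M -> 'I_M -> bool;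
  (* rcvA k w i : the round-k message of CU w is received by UAV i *)
  rcvA : nat -> 'I_M -> 'I_N -> bool;
  (* bc k w : a CU that computes no trajectory in round k still broadcasts a
     message (e.g. a rebroadcast request of the recovery mode) *)
  bc : nat -> 'I_M -> bool;
  (* AET k p : the UAV at position p of the ordered set A_ET(k) (the same for
     all CUs running a DMPC step in round k) *)
  AET : nat -> 'I_M -> 'I_N
}.

Definition pos (M k : nat) (w : 'I_M) : 'I_M :=
  Ordinal (ltn_pmod (k + w) (leq_ltn_trans (leq0n w) (ltn_ord w))).

(* State at round k, after the information-tracker update of round k. *)
Record state (N M : nat) := State {
  trk  : 'I_N -> 'I_M -> {fset Traj M};
  upd  : 'I_N -> 'I_M -> bool;           (* true = up-to-date, false = deprecated *)
  rref : 'I_N -> Traj M                  (* reference trajectory followed by UAV i in round k *)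
}.

Definition init_state (N M : nat) : state N M :=
  State (fun _ _ => fset0) (fun _ _ => false) (fun _ => None).

Section Step.
Variables (N M : nat) (E : env N M) (k : nat) (s : state N M).

Definition dmpc (w : 'I_M) : bool := [forall i, upd s i w].
Definition target (w : 'I_M) : 'I_N := AET E k (pos k w).
Definition computes (w : 'I_M) : bool :=
  dmpc w && (#|` trk s (target w) w| == 1)%N.
Definition newfor (w : 'I_M) (i : 'I_N) : bool := computes w && (target w == i).
Definition sends (w : 'I_M) : bool := computes w || bc E k w.
(* CU w' gets the round-k message of CU s' (a CU always knows its own message) *)
Definition gotC (s' w' : 'I_M) : bool := sends s' && ((s' == w') || rcvC E k s' w').

Definition next_ref (i : 'I_N) : Traj M :=
  match [pick w | newfor w i && rcvA E k w i] with
  | Some w => Some (w, k)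
  | None => rref s i
  end.

Definition trk1 (i : 'I_N) (w : 'I_M) : {fset Traj M} :=
  if rcvU E k i w then [fset rref s i] else trk s i w.
Definition upd1 (i : 'I_N) (w : 'I_M) : bool := rcvU E k i w || upd s i w.
Definition multi (w : 'I_M) : bool := [exists i, (1 < #|` trk1 i w|)%N].
Definition few (w : 'I_M) : bool := (#|[set s' | gotC s' w]| < M)%N.
Definition next_upd (i : 'I_N) (w : 'I_M) : bool :=
  upd1 i w && ~~ multi w && ~~ few w.
Definition next_trk (i : 'I_N) (w : 'I_M) : {fset Traj M} :=
  trk1 i w `|` [fset (Some (s', k) : Traj M) | s' in [seq s' <- enum 'I_M | gotC s' w && newfor s' i]].

Definition step : state N M := State next_trk next_upd next_ref.
End Step.

Fixpoint run (N M : nat) (E : env N M) (k : nat) : state N M :=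
  match k with
  | 0 => init_state N M
  | k'.+1 => step E k' (run E k')
  end.

From HB Require Import structures.
From mathcomp Require Import all_boot all_order.
From mathcomp Require Import finmap.
Set Implicit Arguments. Unset Strict Implicit. Unset Printing Implicit Defensive.
Local Open Scope fset_scope.

(* An up-to-date tracker was either refreshed by a message of the UAV, or it
   contains the UAV's current reference trajectory (an invariant of [run]) and,
   not having been deprecated by rule (2), has at most one element; either way
   it equals {rref i}.  Not being deprecated by rule (3) means the CU received
   all M CU messages, so the trajectories added by rule (4) do not depend on
   the CU either. *)

Lemma fset1_card_le1 (T : choiceType) (A : {fset T}) (x : T) :
  x \in A -> (#|` A| <= 1)%N -> A = [fset x].
Proof.
by move=> xA cardA; apply/esym/eqP; rewrite eqEfcard fsub1set xA cardfs1.
Qed.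

Definition rref_in_trk (N M : nat) (s : state N M) : Prop :=
  forall (i : 'I_N) (w : 'I_M), upd s i w -> rref s i \in trk s i w.

Section Step.
Variables (N M : nat) (E : env N M) (k : nat) (s : state N M).

Lemma gotC_all (w : 'I_M) : ~~ few E k s w -> forall s' : 'I_M, gotC E k s s' w.
Proof.
rewrite /few -leqNgt => cardM s'.
have all_got : [set s'0 | gotC E k s s'0 w] = setT.
  by apply/eqP; rewrite eqEcard subsetT cardsT card_ord.
by move/setP/(_ s'): all_got; rewrite !inE.
Qed.

Definition new_trajs (i : 'I_N) : {fset Traj M} :=
  [fset (Some (s', k) : Traj M) | s' in [seq s' <- enum 'I_M | newfor E k s s' i]].

Hypothesis s_rref_in_trk : rref_in_trk s.

Lemma trk1_next_upd (i : 'I_N) (w : 'I_M) :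
  next_upd E k s i w -> trk1 E k s i w = [fset rref s i].
Proof.
rewrite /next_upd /upd1 /trk1 => /andP [/andP [upd1_iw not_multi] _].
case rcv: (rcvU E k i w) upd1_iw => //= upd_iw.
apply: fset1_card_le1; first exact: s_rref_in_trk.
move: not_multi; rewrite /multi negb_exists => /forallP /(_ i).
by rewrite /trk1 rcv leqNgt negbK.
Qed.

Lemma next_trk_next_upd (i : 'I_N) (w : 'I_M) :
  next_upd E k s i w -> next_trk E k s i w = rref s i |` new_trajs i.
Proof.
move=> next_upd_iw; rewrite /next_trk trk1_next_upd //.
move: next_upd_iw => /andP [_ /gotC_all got_all].
by under eq_filter => s' do rewrite got_all.
Qed.

Lemma step_rref_in_trk : rref_in_trk (step E k s).
Proof.
move=> i w /next_trk_next_upd; rewrite /step /= => ->.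
rewrite /next_ref; case: pickP => [w' /andP [new_w' _] | _]; last exact: fset1U1.
by apply/fset1Ur/imfsetP; exists w'; rewrite //= mem_filter new_w' mem_enum.
Qed.

End Step.

Lemma run_rref_in_trk (N M : nat) (E : env N M) (k : nat) : rref_in_trk (run E k).
Proof. by elim: k => [|k IH] //=; apply: step_rref_in_trk. Qed.

Theorem lemma2 (N M : nat) (HM : (1 < M)%N) (HMN : (M < N)%N) (E : env N M)
  (HAET : forall k, injective (AET E k))
  (w v : 'I_M) (i : 'I_N) (k : nat) :
  w != v ->
  upd (run E k) i w -> upd (run E k) i v ->
  trk (run E k) i w = trk (run E k) i v.
Proof.
move=> _; case: k => [|k] //= upd_w upd_v.
have inv := @run_rref_in_trk N M E k.
by rewrite (next_trk_next_upd inv upd_w) (next_trk_next_upd inv upd_v).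
Qed.
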